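(* Let $k\ge 3$, $n_1=\cdots=n_k\ge 2$ and $r\in[k]$. The number of distinct isomorphism classes of graphs in the LC orbit $\mathcal{O}(CS^r_{n_1,\dots,n_k})$ is $\lceil k/2\rceil+k$.
   Context: The clique-star $CS^r_{n_1,\dots,n_k}$ has vertex set $U_1\sqcup\cdots\sqcup U_k$ with $|U_i|=n_i$; each $U_i$ is a clique, every vertex of $U_r$ is adjacent to every vertex of each $U_i$ with $i\ne r$, and there are no edges between $U_i$ and $U_l$ for distinct $i,l\ne r$. The local complement $c_v(G)$ complements the edges among the neighbours of $v$; $\mathcal{O}(G)$ is the set of all graphs on the labelled vertex set obtainable from $G$ by finite sequences of local complements. *)

From mathcomp Require Import all_boot all_fingroup.
Set Implicit Arguments. Unset Strict Implicit. Unset Printing Implicit Defensive.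

(* A graph on a finite labelled vertex set T is represented by its set of
   ordered adjacent pairs (both orientations present, no loops). *)
Definition graph (T : finType) := {set (T * T)}.

Definition lc (T : finType) (v : T) (G : graph T) : graph T :=
  [set e | (e \in G) (+) [&& e.1 != e.2, (v, e.1) \in G & (v, e.2) \in G]].

Definition lc_step (T : finType) : rel (graph T) :=
  fun G H => [exists v : T, H == lc v G].

Definition lc_orbit (T : finType) (G : graph T) : {set graph T} :=
  [set H | connect (@lc_step T) G H].

Definition graph_iso (T : finType) (G H : graph T) : bool :=
  [exists p : {perm T}, [forall x : T, forall y : T,
     ((x, y) \in G) == ((p x, p y) \in H)]].

Definition iso_classes (T : finType) (S : {set graph T}) : {set {set graph T}} :=
  [set [set H in S | graph_iso G H] | G in S].

(* Clique-star CS^r_{n,...,n} with k parts each of size n; vertex (i, j)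
   lies in part U_i. *)
Definition clique_star (k n : nat) (r : 'I_k) : graph ('I_k * 'I_n)%type :=
  [set e | [&& e.1 != e.2 &
             [|| e.1.1 == e.2.1, e.1.1 == r | e.2.1 == r]]].
Arguments clique_star : clear implicits.

(** Every graph in the LC orbit of a clique-star keeps its coarse shape: each part U_i is
    a clique, an independent set, or a star whose centre alone is joined to the other
    parts, and the parts are joined along a star or a complete graph.  Both levels are
    "hub graphs" (a star or a complete graph), and local complementation at a vertex acts
    on a hub graph by moving or removing its hub, so the shape is preserved.  Up to
    isomorphism such a graph only depends on whether the quotient is a star and on the
    number s of star-shaped parts: s ranges over [0, k-1] for a star quotient and over the
    odd numbers of [1, k] for a complete one, and each value is reached from the
    clique-star.  These k + ceil(k/2) graphs are pairwise non-isomorphic: they have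
    s(n-1) pendant vertices, and some non-pendant vertex is adjacent to all the other
    non-pendant ones unless the quotient is a star and s is odd. *)

From mathcomp Require Import all_boot all_fingroup.
From mathcomp Require Import zify.
Set Implicit Arguments. Unset Strict Implicit. Unset Printing Implicit Defensive.

Section HubAdjacency.
Variable V : eqType.
Implicit Types (h : option V) (p q : V).

(* [h = Some c]: the star centred at [c]; [h = None]: the complete graph. *)
Definition hub_adj h p q : bool :=
  if h is Some c then (p == c) || (q == c) else true.

Definition lc_hub h q : option V :=
  if h is Some c then (if c == q then None else h) else Some q.

Lemma hub_adjC h : symmetric (hub_adj h).
Proof. by case: h => [c|] p q //=; rewrite orbC. Qed.

Lemma hub_adj_lc_hub h q p : hub_adj (lc_hub h q) q p = hub_adj h q p.
Proof.
case: h => [c|] /=; last by rewrite eqxx.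
by case: (eqVneq c q) => [->|cq] //=; rewrite eq_sym (negbTE cq).
Qed.

Lemma hub_adj_lc_hubE h q p p' : p != q -> p' != q -> p != p' ->
  hub_adj (lc_hub h q) p p' = hub_adj h p p' (+) hub_adj h q p && hub_adj h q p'.
Proof.
case: h => [c|] pq p'q pp' /=; last by rewrite (negbTE pq) (negbTE p'q).
case: (eqVneq c q) => [->|cq] /=; first by rewrite (negbTE pq) (negbTE p'q).
by case: (eqVneq p c) => [<-|] /=; rewrite ?addbF // [p' == p]eq_sym (negbTE pp').
Qed.

End HubAdjacency.

Lemma hub_adj_omap (V W : eqType) (f : V -> W) h p q : injective f ->
  hub_adj (omap f h) (f p) (f q) = hub_adj h p q.
Proof. by case: h => [c|] f_inj //=; rewrite !(inj_eq f_inj). Qed.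

Section HubGraph.
Variables I J : finType.
Implicit Types (a : I -> option (option J)) (b : option I) (v x y : (I * J)%type).

(* Part [i] carries the hub graph [a i] on [option J], where [None] stands for the outside
   of the part: [(i, j)] is joined to other parts iff it is [exposed], and then to the
   exposed vertices of the parts adjacent to [i] in the hub graph [b] on parts. *)
Definition exposed a x := hub_adj (a x.1) (Some x.2) None.

Definition hub_edge a b x y :=
  if x.1 == y.1 then hub_adj (a x.1) (Some x.2) (Some y.2)
  else [&& exposed a x, hub_adj b x.1 y.1 & exposed a y].

Definition hub_graph a b : graph (I * J)%type :=
  [set e | (e.1 != e.2) && hub_edge a b e.1 e.2].

Definition lc_parts a b v l : option (option J) :=
  if l == v.1 then lc_hub (a l) (Some v.2)
  else if exposed a v && hub_adj b v.1 l then lc_hub (a l) None else a l.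

Definition lc_quot a b v : option I :=
  if exposed a v then lc_hub b v.1 else b.

Lemma exposed_lc_parts a b v x :
  exposed (lc_parts a b v) x =
  exposed a x (+) [&& x.1 == v.1, x.2 != v.2, hub_adj (a v.1) (Some v.2) (Some x.2)
                    & exposed a v].
Proof.
case: v x => i j [l p]; rewrite /exposed /lc_parts /=.
case: (eqVneq l i) => [->|li] /=; last first.
  by case: ifP => _; rewrite ?addbF // hub_adjC hub_adj_lc_hub hub_adjC.
case: (eqVneq p j) => [->|pj] /=; first by rewrite hub_adj_lc_hub addbF.
by rewrite hub_adj_lc_hubE.
Qed.

Lemma hub_adj_lc_quot a b v l m : l != m ->
  hub_adj (lc_quot a b v) l m =
  hub_adj b l m (+) [&& l != v.1, m != v.1, exposed a v, hub_adj b v.1 l & hub_adj b v.1 m].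
Proof.
move=> lm; rewrite /lc_quot; case: (exposed a v); rewrite ?andbF ?addbF //=.
case: (eqVneq l v.1) => [->|lv]; first by rewrite hub_adj_lc_hub addbF.
case: (eqVneq m v.1) => [->|mv]; first by rewrite hub_adjC hub_adj_lc_hub hub_adjC addbF.
by rewrite hub_adj_lc_hubE.
Qed.

Lemma hub_adj_lc_parts a b v l p q : p != q ->
  hub_adj (lc_parts a b v l) (Some p) (Some q) =
  hub_adj (a l) (Some p) (Some q) (+)
  [&& v != (l, p), v != (l, q), hub_edge a b v (l, p) & hub_edge a b v (l, q)].
Proof.
case: v => i j pq; rewrite /lc_parts /hub_edge /= !xpair_eqE.
case: (eqVneq l i) => [->|li]; rewrite ?eqxx /=; last first.
  case: (exposed a (i, j)); case: (hub_adj b i l); rewrite /= ?addbF //.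
  by rewrite hub_adj_lc_hubE // !(hub_adjC _ None).
case: (eqVneq j p) => [->|jp] /=; first by rewrite hub_adj_lc_hub addbF.
case: (eqVneq j q) => [->|jq] /=; first by rewrite hub_adjC hub_adj_lc_hub hub_adjC addbF.
by rewrite hub_adj_lc_hubE // eq_sym.
Qed.

Lemma hub_edge_lc a b v x y : x != y ->
  hub_edge (lc_parts a b v) (lc_quot a b v) x y =
  hub_edge a b x y (+) [&& v != x, v != y, hub_edge a b v x & hub_edge a b v y].
Proof.
case: v x y => i j [l p] [m q]; rewrite {1 2}/hub_edge /=.
case: (eqVneq l m) => [<-|lm _].
  by rewrite xpair_eqE eqxx => pq; rewrite hub_adj_lc_parts.
rewrite !exposed_lc_parts hub_adj_lc_quot //= /hub_edge /= !xpair_eqE ![i == _]eq_sym.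
case: (eqVneq l i) lm => [->|li]; case: (eqVneq m i) => [->|mi] //= _;
  rewrite ?addbF ?[j == _]eq_sym ?[hub_adj b l i]hub_adjC.
- by case: (hub_adj b i m); case: (exposed a (m, q)); rewrite /= ?andbT ?andbF.
- by case: (hub_adj b i l); case: (exposed a (l, p)); case: (exposed a (i, j));
    rewrite /= ?andbT ?andbF.
- by case: (exposed a (i, j)); case: (exposed a (l, p)); case: (exposed a (m, q));
    rewrite /= ?andbT ?andbF.
Qed.

Lemma lc_hub_graph a b v :
  lc v (hub_graph a b) = hub_graph (lc_parts a b v) (lc_quot a b v).
Proof.
apply/setP => -[x y]; rewrite !inE /=.
case: (eqVneq x y) => [->|xy] //=.
by rewrite hub_edge_lc // andbACA -!andbA.
Qed.

Lemma eq_hub_graph a a' b : a =1 a' -> hub_graph a b = hub_graph a' b.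
Proof. by move=> eq_a; apply/setP => -[x y]; rewrite !inE /hub_edge /exposed !eq_a. Qed.

Lemma hub_graph_iso a a' b b' (s : {perm I}) (t : I -> {perm J}) :
    (forall l, a' (s l) = omap (omap (t l)) (a l)) -> b' = omap s b ->
  graph_iso (hub_graph a b) (hub_graph a' b').
Proof.
move=> a'E ->; pose f x := (s x.1, t x.1 x.2).
have f_inj : injective f by move=> [l p] [m q] [/perm_inj eq_lm]; subst m => /perm_inj ->.
apply/existsP; exists (perm f_inj); apply/'forall_forallP => x y.
rewrite !permE !inE (inj_eq f_inj) /hub_edge /exposed /= (inj_eq perm_inj) !a'E.
have adjE l (p q : option J) :
    hub_adj (omap (omap (t l)) (a l)) (omap (t l) p) (omap (t l) q) = hub_adj (a l) p q.
  by rewrite hub_adj_omap //; apply/inj_omap/perm_inj.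
apply/eqP; case: (eqVneq x.1 y.1) => [<-|_] /=; first by rewrite -(adjE _ (Some _) (Some _)).
by rewrite -(adjE x.1 _ None) -(adjE y.1 _ None) -(hub_adj_omap b x.1 y.1 (@perm_inj _ s)).
Qed.

End HubGraph.

Section GraphIso.
Variable T : finType.
Implicit Types (G H K : graph T) (S : {set graph T}).

Lemma graph_isoP G H :
  reflect (exists p : {perm T}, forall x y, ((p x, p y) \in H) = ((x, y) \in G))
          (graph_iso G H).
Proof.
apply: (iffP existsP) => [[p /'forall_forallP pE]|[p pE]]; exists p.
  by move=> x y; apply/esym/eqP/pE.
by apply/'forall_forallP => x y; rewrite pE.
Qed.

Lemma graph_iso_refl G : graph_iso G G.
Proof. by apply/graph_isoP; exists 1%g => x y; rewrite !perm1. Qed.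

Lemma graph_iso_sym G H : graph_iso G H -> graph_iso H G.
Proof.
case/graph_isoP => p pE; apply/graph_isoP; exists p^-1%g => x y.
by rewrite -pE !permKV.
Qed.

Lemma graph_iso_trans G H K : graph_iso G H -> graph_iso H K -> graph_iso G K.
Proof.
case/graph_isoP => p pE /graph_isoP [q qE]; apply/graph_isoP; exists (p * q)%g => x y.
by rewrite !permM qE pE.
Qed.

Lemma card_iso_classes_transversal S (I : finType) (rep : I -> graph T) :
    (forall i, rep i \in S) -> (forall G, G \in S -> exists i, graph_iso G (rep i)) ->
    (forall i i', graph_iso (rep i) (rep i') -> i = i') ->
  #|iso_classes S| = #|I|.
Proof.
move=> repS cover rep_inj; pose cls G := [set H in S | graph_iso G H].
have clsE G H : graph_iso G H -> cls G = cls H.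
  move=> GH; apply/setP => K; rewrite !inE; congr (_ && _).
  by apply/idP/idP; [apply/graph_iso_trans/graph_iso_sym | apply/graph_iso_trans].
have -> : iso_classes S = [set cls (rep i) | i : I].
  apply/setP => C; apply/imsetP/imsetP => [[G GS ->]|[i _ ->]]; last by exists (rep i).
  by have [i Gi] := cover G GS; exists i => //; apply: clsE.
rewrite card_imset // => i i' eq_cls; apply: rep_inj.
have : rep i' \in cls (rep i') by rewrite inE repS graph_iso_refl.
by rewrite -eq_cls inE => /andP[].
Qed.

Definition deg G x := #|[set y | (x, y) \in G]|.

Definition pendants G := [set x | deg G x == 1].

Definition has_core_dominator G :=
  [exists x in ~: pendants G, [forall y in ~: pendants G, (y != x) ==> ((x, y) \in G)]].

Section Transport.
Variables (G H : graph T) (p : {perm T}).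
Hypothesis pE : forall x y, ((p x, p y) \in H) = ((x, y) \in G).

Lemma deg_perm x : deg H (p x) = deg G x.
Proof.
rewrite /deg -[RHS](card_imset _ (@perm_inj _ p)); apply: eq_card => y.
by rewrite -[y](permKV p) mem_imset ?inE ?pE; last exact: perm_inj.
Qed.

Lemma pendants_perm : pendants H = p @: pendants G.
Proof.
by apply/setP => y; rewrite -[y](permKV p) mem_imset ?inE ?deg_perm //; apply: perm_inj.
Qed.

End Transport.

Lemma card_pendants_iso G H : graph_iso G H -> #|pendants H| = #|pendants G|.
Proof. by case/graph_isoP => p pE; rewrite (pendants_perm pE) card_imset //; apply: perm_inj. Qed.

Lemma has_core_dominator_iso G H :
  graph_iso G H -> has_core_dominator G -> has_core_dominator H.
Proof.
case/graph_isoP => p pE /exists_inP[x xG /forall_inP domx].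
have coreE y : (p y \in ~: pendants H) = (y \in ~: pendants G).
  by rewrite !in_setC (pendants_perm pE) mem_imset //; apply: perm_inj.
apply/exists_inP; exists (p x); first by rewrite coreE.
apply/forall_inP => y; rewrite -[y](permKV p) coreE (inj_eq perm_inj) pE.
exact: domx.
Qed.

End GraphIso.

Lemma perm_of_fiber_card (T : finType) (K : eqType) (g g' : T -> K) :
    (forall k, #|[pred x | g x == k]| = #|[pred x | g' x == k]|) ->
  exists s : {perm T}, forall x, g' (s x) = g x.
Proof.
move=> fibE.
have countE (P : pred T) : count P (Finite.enum T) = #|P|.
  by rewrite cardE /enum_mem size_filter.
have /tuple_permP[p gE] : perm_eq (map g (enum T)) (map_tuple g' (enum_tuple T)).
  by apply/allP => k _; rewrite /= !count_map !countE; apply/eqP/fibE.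
have f_inj : injective (fun x => enum_val (p (enum_rank x))).
  by move=> x y /enum_val_inj/perm_inj/enum_rank_inj.
exists (perm f_inj) => x; rewrite permE.
have x_lt : enum_rank x < size (enum T) by rewrite -cardE.
have := nth_map x (g x) g x_lt; rewrite nth_enum_rank gE => <-.
by rewrite -tnth_nth tnth_mktuple tnth_map (tnth_nth x) (enum_val_nth x).
Qed.

Lemma perm_of_disjoint_sets (T : finType) (A B A' B' : {set T}) :
    [disjoint A & B] -> [disjoint A' & B'] -> #|A| = #|A'| -> #|B| = #|B'| ->
  exists s : {perm T}, forall x, (s x \in A') = (x \in A) /\ (s x \in B') = (x \in B).
Proof.
have fiberE (C D : {set T}) u w : [disjoint C & D] ->
    #|[pred x | (x \in C, x \in D) == (u, w)]| =
    if u then (if w then 0 else #|C|) else if w then #|D| else #|T| - (#|C| + #|D|).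
  move=> CD; case: u; case: w.
  - apply: eq_card0 => x; rewrite !inE /= xpair_eqE !eqb_id.
    by case: (boolP (x \in C)) => // /(disjointFr CD) ->.
  - apply: eq_card => x; rewrite !inE /= xpair_eqE eqb_id eqbF_neg.
    by case: (boolP (x \in C)) => // /(disjointFr CD) ->.
  - apply: eq_card => x; rewrite !inE /= xpair_eqE eqb_id eqbF_neg.
    by case: (boolP (x \in D)) => [/(disjointFl CD) ->|]; rewrite ?andbF.
  rewrite -[#|C| + _]subn0 -(cards0 T) -(disjoint_setI0 CD) -cardsU.
  rewrite -(cardsC (C :|: D)) addKn; apply: eq_card => x.
  by rewrite !inE /= xpair_eqE !eqbF_neg negb_or.
move=> AB A'B' cardA cardB.
have [|s sE] := @perm_of_fiber_card _ _
  (fun x => (x \in A, x \in B)) (fun x => (x \in A', x \in B')).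
  by move=> -[u w]; rewrite !fiberE // cardA cardB.
by exists s => x; case: (sE x) => -> ->.
Qed.

Section OrbitForm.
Variables I J : finType.
Implicit Types (L : {set I}) (h : I -> J) (b : option I).

(* The parts in [L] are stars centred at [h l].  Under a star quotient centred at [c] the
   other parts are cliques, except [c] itself, which is independent when [#|L|] is odd;
   under a complete quotient ([b = None]) they are independent sets. *)
Definition orbit_parts L h b l : option (option J) :=
  if l \in L then Some (Some (h l))
  else if b is Some c then (if (c == l) && odd #|L| then Some None else None)
  else Some None.

Definition orbit_form L h b := hub_graph (orbit_parts L h b) b.

Definition orbit_form_ok L b := if b is Some c then c \notin L else odd #|L|.

Lemma eq_orbit_form L h h' b : {in L, h =1 h'} -> orbit_form L h b = orbit_form L h' b.
Proof.
by move=> eq_h; apply: eq_hub_graph => l; rewrite /orbit_parts; case: ifP => // /eq_h ->.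
Qed.

Lemma exposed_orbit_parts L h b x :
  exposed (orbit_parts L h b) x = (x.1 \notin L) || (x.2 == h x.1).
Proof.
rewrite /exposed /orbit_parts; case: ifP => _ /=; first by rewrite orbF.
by case: b => [c|] //; case: ifP.
Qed.

Lemma lc_orbit_form_pendant L h b i j : i \in L -> j != h i ->
  lc (i, j) (orbit_form L h b) = orbit_form L h b.
Proof.
move=> iL jh; have unexposed : exposed (orbit_parts L h b) (i, j) = false.
  by rewrite exposed_orbit_parts /= iL (negbTE jh).
rewrite /orbit_form lc_hub_graph /lc_quot unexposed; apply: eq_hub_graph => l.
rewrite /lc_parts unexposed /=; case: eqP => [->|//].
by rewrite /orbit_parts iL /= (inj_eq Some_inj) eq_sym (negbTE jh).
Qed.

Lemma lc_orbit_form_leaf L h c i : c != i ->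
  lc (i, h i) (orbit_form L h (Some c)) =
  orbit_form (if i \in L then L :\ i else i |: L) h (Some c).
Proof.
move=> ci; have exposed_i : exposed (orbit_parts L h (Some c)) (i, h i).
  by rewrite exposed_orbit_parts eqxx orbT.
rewrite /orbit_form lc_hub_graph /lc_quot exposed_i /= (negbTE ci).
apply: eq_hub_graph => l; rewrite /lc_parts exposed_i /= /orbit_parts.
have oddL' : odd #|if i \in L then L :\ i else i |: L| = ~~ odd #|L|.
  case: ifP => iL; last by rewrite cardsU1 iL.
  by rewrite [in RHS](cardsD1 i) iL add1n /= negbK.
case: (eqVneq l i) => [->|li].
  by case: ifP => iL; rewrite ?setD11 ?setU11 ?iL //= (negbTE ci) //= eqxx.
have lL' : (l \in if i \in L then L :\ i else i |: L) = (l \in L).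
  by case: ifP; rewrite ?in_setD1 ?in_setU1 (negbTE li).
rewrite lL' oddL' [i == c]eq_sym (negbTE ci) /=.
case: (eqVneq l c) => [->|//].
by case: (c \in L) => //; case: (odd _).
Qed.

Lemma lc_orbit_form_center L h c : c \notin L ->
  lc (c, h c) (orbit_form L h (Some c)) =
  orbit_form (if odd #|L| then L else c |: L) h None.
Proof.
move=> cL; have exposed_c : exposed (orbit_parts L h (Some c)) (c, h c).
  by rewrite exposed_orbit_parts /= cL.
rewrite /orbit_form lc_hub_graph /lc_quot exposed_c /= eqxx.
apply: eq_hub_graph => l; rewrite /lc_parts exposed_c /= /orbit_parts.
case: (eqVneq l c) => [->|lc].
  by rewrite (negbTE cL) /=; case: ifP => oddL; rewrite ?(negbTE cL) ?setU11.
have lL' : (l \in if odd #|L| then L else c |: L) = (l \in L).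
  by case: ifP; rewrite ?in_setU1 ?(negbTE lc).
by rewrite lL' eqxx /=; case: (l \in L).
Qed.

Lemma lc_orbit_form_complete L h i : odd #|L| ->
  lc (i, h i) (orbit_form L h None) = orbit_form (L :\ i) h (Some i).
Proof.
move=> oddL; have exposed_i : exposed (orbit_parts L h None) (i, h i).
  by rewrite exposed_orbit_parts eqxx orbT.
rewrite /orbit_form lc_hub_graph /lc_quot exposed_i /=.
apply: eq_hub_graph => l; rewrite /lc_parts exposed_i /= /orbit_parts in_setD1.
case: (eqVneq l i) => [->|li] /=; last by case: (l \in L).
have := cardsD1 i L; case: (i \in L) => /= cardL; move: oddL; rewrite cardL.
- by rewrite add1n eqxx /= => /negbTE ->.
- by rewrite add0n => ->.
Qed.

Lemma orbit_form_lc_closed L h b v : orbit_form_ok L b ->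
  exists L' h' b', orbit_form_ok L' b' /\ lc v (orbit_form L h b) = orbit_form L' h' b'.
Proof.
case: v => i j ok.
have [/andP[iL jh]|exposed_v] := boolP ((i \in L) && (j != h i)).
  by exists L, h, b; rewrite lc_orbit_form_pendant.
pose h' l := if l == i then j else h l.
have -> : orbit_form L h b = orbit_form L h' b.
  apply: eq_orbit_form => l lL; rewrite /h'; case: (eqVneq l i) => [li|//]; subst l.
  by move: exposed_v; rewrite lL negbK => /eqP.
have -> : j = h' i by rewrite /h' eqxx.
case: b ok => [c /= cL|/= oddL]; last first.
  by exists (L :\ i), h', (Some i); rewrite /= setD11 lc_orbit_form_complete.
have [<-|ci] := eqVneq c i.
  exists (if odd #|L| then L else c |: L), h', None; rewrite lc_orbit_form_center //.
  by split => //=; case: ifP => //= evenL; rewrite cardsU1 cL add1n /= evenL.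
exists (if i \in L then L :\ i else i |: L), h', (Some c); rewrite lc_orbit_form_leaf //.
by split => //=; case: ifP; rewrite ?in_setD1 ?in_setU1 (negbTE ci).
Qed.

Lemma lc_orbit_of_orbit_form L h b G : orbit_form_ok L b ->
    G \in lc_orbit (orbit_form L h b) ->
  exists L' h' b', orbit_form_ok L' b' /\ G = orbit_form L' h' b'.
Proof.
move=> ok; rewrite inE => /connectP[p]; elim: p L h b ok => [|H p IH] L h b ok /=.
  by move=> _ ->; exists L, h, b.
case/andP => /existsP[v /eqP ->] path_p G_last.
have [L' [h' [b' [ok' E]]]] := orbit_form_lc_closed h v ok.
by apply: (IH L' h' b' ok'); rewrite -E.
Qed.

Lemma orbit_form_perm L h b L' h' b' (s : {perm I}) :
    (forall l, (s l \in L') = (l \in L)) -> b' = omap s b -> #|L'| = #|L| ->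
  graph_iso (orbit_form L h b) (orbit_form L' h' b').
Proof.
move=> sL sb cardL; apply: (hub_graph_iso (s := s) (t := fun l => tperm (h l) (h' (s l)))) => // l.
rewrite /orbit_parts sL sb cardL; case: (l \in L) => /=; first by rewrite tpermL.
by case: b {sb} => [c|] //=; rewrite (inj_eq perm_inj); case: ifP.
Qed.

Lemma orbit_form_iso L h b L' h' b' :
    orbit_form_ok L b -> orbit_form_ok L' b' -> (b == None) = (b' == None) ->
    #|L| = #|L'| ->
  graph_iso (orbit_form L h b) (orbit_form L' h' b').
Proof.
pose center (b : option I) : {set I} := if b is Some c then [set c] else set0.
have center_disj b0 L0 : orbit_form_ok L0 b0 -> [disjoint center b0 & L0].
  by case: b0 => [c|] /=; rewrite ?disjoints1 // -setI_eq0 set0I.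
move=> ok ok' bb' cardL.
have [|s sE] := perm_of_disjoint_sets (center_disj _ _ ok) (center_disj _ _ ok') _ cardL.
  by case: b b' bb' {ok ok'} => [c|] [c'|] //= _; rewrite !cards1.
apply: (orbit_form_perm _ _ (s := s)) => [l||//]; first by case: (sE l).
case: b b' bb' sE {ok ok'} => [c|] [c'|] //= _ sE.
by have [] := sE c; rewrite !in_set1 eqxx => /eqP ->.
Qed.

End OrbitForm.

Lemma exists_neq (T : finType) (x : T) : 1 < #|T| -> exists y, y != x.
Proof.
move=> T_gt1; have /card_gt0P[y] : 0 < #|[set~ x]| by rewrite cardsC1; lia.
by rewrite !inE; exists y.
Qed.

Lemma exists_neq2 (T : finType) (x y : T) : 2 < #|T| -> exists z, (z != x) && (z != y).
Proof.
move=> T_gt2; have /card_gt0P[z] : 0 < #|~: [set x; y]|.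
  by have := cardsC [set x; y]; rewrite cards2; lia.
by rewrite !inE negb_or; exists z.
Qed.

Lemma deg_gt1 (T : finType) (G : graph T) x y1 y2 :
  y1 != y2 -> (x, y1) \in G -> (x, y2) \in G -> 1 < deg G x.
Proof. by move=> y12 xy1 xy2; apply/card_gt1P; exists y1, y2; rewrite !inE. Qed.

Section OrbitFormInvariants.
Variables (I J : finType) (L : {set I}) (h : I -> J) (b : option I).
Hypotheses (I_gt2 : 2 < #|I|) (J_gt1 : 1 < #|J|) (ok : orbit_form_ok L b).

Lemma mem_orbit_form x y :
  ((x, y) \in orbit_form L h b) = (x != y) && hub_edge (orbit_parts L h b) b x y.
Proof. by rewrite inE. Qed.

Lemma orbit_form_edge_out i p l :
    exposed (orbit_parts L h b) (i, p) -> l != i -> hub_adj b i l ->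
  ((i, p), (l, h l)) \in orbit_form L h b.
Proof.
move=> ex_ip li bil; rewrite mem_orbit_form /hub_edge /= xpair_eqE.
by rewrite [i == l]eq_sym (negbTE li) ex_ip bil exposed_orbit_parts eqxx orbT.
Qed.

Lemma pendants_orbit_form :
  pendants (orbit_form L h b) = [set x | ~~ exposed (orbit_parts L h b) x].
Proof.
apply/setP => -[i p]; rewrite !inE exposed_orbit_parts /= negb_or negbK.
have [/andP[iL ph]|ex_ip] := boolP ((i \in L) && (p != h i)).
  apply/eqP; rewrite /deg -(cards1 (i, h i)); apply: eq_card => -[m q].
  rewrite !inE /hub_edge /= exposed_orbit_parts iL /= !xpair_eqE.
  rewrite [m == i]eq_sym; case: (eqVneq i m) => [_|im] /=; last by rewrite (negbTE ph).
  rewrite /orbit_parts iL /= !(inj_eq Some_inj) (negbTE ph) /=.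
  by case: (eqVneq q (h i)) => [->|_]; rewrite ?andbT ?andbF.
have {}ex_ip : exposed (orbit_parts L h b) (i, p).
  by rewrite exposed_orbit_parts /= -[p == _]negbK -negb_and.
apply/negbTE; rewrite neq_ltn orbC; apply/orP; left.
have [[c bc ci]|adj_i] :
    (exists2 c, b = Some c & c != i) \/ (forall l, l != i -> hub_adj b i l).
  case: (b) => [c|]; last by right.
  by case: (eqVneq c i) => [->|ci]; [right => l _; rewrite /= eqxx | left; exists c].
- have [q qp] := exists_neq p J_gt1.
  apply: (deg_gt1 (y1 := (c, h c)) (y2 := (i, q))).
  + by rewrite xpair_eqE (negbTE ci).
  + by apply: orbit_form_edge_out; rewrite // bc /= eqxx orbT.
  rewrite mem_orbit_form /hub_edge /= eqxx xpair_eqE eqxx eq_sym (negbTE qp) /=.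
  move: ex_ip; rewrite /orbit_parts exposed_orbit_parts bc /= (negbTE ci).
  by case: (i \in L) => //= /eqP <-; rewrite eqxx.
- have [l1 l1i] := exists_neq i (ltnW I_gt2).
  have [l2 /andP[l2i l2l1]] := exists_neq2 i l1 I_gt2.
  apply: (deg_gt1 (y1 := (l1, h l1)) (y2 := (l2, h l2))).
  + by rewrite xpair_eqE eq_sym (negbTE l2l1).
  + exact: orbit_form_edge_out (adj_i _ l1i).
  + exact: orbit_form_edge_out (adj_i _ l2i).
Qed.

Lemma mem_core_orbit_form x :
  (x \in ~: pendants (orbit_form L h b)) = exposed (orbit_parts L h b) x.
Proof. by rewrite in_setC pendants_orbit_form inE negbK. Qed.

Lemma orbit_form_core_dominated :
  (b == None) || ~~ odd #|L| -> has_core_dominator (orbit_form L h b).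
Proof.
have [[c bc]|bN] : (exists c, b = Some c) \/ b = None.
  by case: (b) => [c|]; [left; exists c | right].
  rewrite {1}bc /= => evenL; have cL : c \notin L by move: ok; rewrite bc.
  apply/exists_inP; exists (c, h c); first by rewrite mem_core_orbit_form exposed_orbit_parts cL.
  apply/forall_inP => -[m q]; rewrite mem_core_orbit_form => ex_mq; apply/implyP => ne.
  rewrite mem_orbit_form eq_sym ne /hub_edge /= ex_mq bc /= eqxx exposed_orbit_parts /= cL.
  by case: (c == m) => //=; rewrite /orbit_parts (negbTE cL) eqxx (negbTE evenL).
move=> _; have /card_gt0P[l lL] : 0 < #|L| by apply: odd_gt0; move: ok; rewrite bN.
apply/exists_inP; exists (l, h l).
  by rewrite mem_core_orbit_form exposed_orbit_parts eqxx orbT.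
apply/forall_inP => -[m q]; rewrite mem_core_orbit_form => ex_mq; apply/implyP => ne.
rewrite mem_orbit_form eq_sym ne /hub_edge /= ex_mq bN exposed_orbit_parts eqxx orbT /=.
by case: (l == m); rewrite // /orbit_parts lL /= eqxx.
Qed.

Lemma orbit_form_core_undominated c :
  b = Some c -> odd #|L| -> ~~ has_core_dominator (orbit_form L h b).
Proof.
move=> bc oddL; have cL : c \notin L by move: ok; rewrite bc.
apply/exists_inP => -[[i p]]; rewrite mem_core_orbit_form => ex_ip /forall_inP dom.
have [ic|ic] := eqVneq i c.
  subst i; have [q qp] := exists_neq p J_gt1.
  have := dom (c, q); rewrite mem_core_orbit_form exposed_orbit_parts (negbTE cL) => /(_ isT).
  rewrite xpair_eqE eqxx (negbTE qp) mem_orbit_form /hub_edge /= eqxx.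
  by rewrite /orbit_parts (negbTE cL) bc eqxx oddL /= andbF.
have [l /andP[li lc]] := exists_neq2 i c I_gt2.
have := dom (l, h l); rewrite mem_core_orbit_form exposed_orbit_parts eqxx orbT => /(_ isT).
rewrite mem_orbit_form /hub_edge /= !xpair_eqE [i == l]eq_sym (negbTE li) bc /=.
by rewrite (negbTE ic) (negbTE lc) andbF.
Qed.

Lemma has_core_dominator_orbit_form :
  has_core_dominator (orbit_form L h b) = (b == None) || ~~ odd #|L|.
Proof.
apply/idP/idP => [dom|]; last exact: orbit_form_core_dominated.
apply/contraT; rewrite negb_or negbK => /andP[bN oddL].
have [c bc] : exists c, b = Some c by case: (b) bN => [c|] //; exists c.
by rewrite (negbTE (orbit_form_core_undominated bc oddL)) in dom.
Qed.

End OrbitFormInvariants.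

Lemma card_pendants_orbit_form (I J : finType) (L : {set I}) (j : J) b :
    2 < #|I| -> 1 < #|J| ->
  #|pendants (orbit_form L (fun _ => j) b)| = #|L| * #|J|.-1.
Proof.
move=> I_gt2 J_gt1; rewrite pendants_orbit_form // -(cardsC1 j) -cardsX.
by apply: eq_card => -[l p]; rewrite !inE exposed_orbit_parts /= negb_or negbK.
Qed.

Lemma clique_star_orbit_form k n (r : 'I_k) (h : 'I_k -> 'I_n) :
  clique_star k n r = orbit_form set0 h (Some r).
Proof.
apply/setP => -[x y]; rewrite !inE /hub_edge !exposed_orbit_parts /orbit_parts !inE cards0 andbF /=.
by case: (x.1 == y.1); rewrite ?andbT.
Qed.

Lemma mem_lc_orbit_lc (T : finType) (G0 G : graph T) v :
  G \in lc_orbit G0 -> lc v G \in lc_orbit G0.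
Proof.
by rewrite !inE => G0G; apply: connect_trans G0G (connect1 _); apply/existsP; exists v.
Qed.

Lemma orbit_form_star_in_orbit k n (r : 'I_k) (j0 : 'I_n) (X : {set 'I_k}) :
  r \notin X -> orbit_form X (fun _ => j0) (Some r) \in lc_orbit (clique_star k n r).
Proof.
rewrite -[X]set_enum; have := enum_uniq X; elim: (enum X) => [|i s IH] /=.
  by move=> _ _; rewrite set_nil -clique_star_orbit_form inE connect0.
case/andP => iNs s_uniq; rewrite set_cons in_setU1 negb_or => /andP[ri rs].
have := mem_lc_orbit_lc (i, j0) (IH s_uniq rs).
by rewrite (@lc_orbit_form_leaf _ _ _ (fun _ => j0) r i) // [i \in _]inE (negbTE iNs).
Qed.

Definition take_set (T : finType) (A : {set T}) m : {set T} := [set x in take m (enum A)].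

Lemma take_set_sub (T : finType) (A : {set T}) m : take_set A m \subset A.
Proof. by apply/subsetP => x; rewrite inE => /mem_take; rewrite mem_enum. Qed.

Lemma card_take_set (T : finType) (A : {set T}) m : m <= #|A| -> #|take_set A m| = m.
Proof.
move=> m_le; rewrite cardsE (card_uniqP (take_uniq m (enum_uniq _))).
by rewrite size_takel // -cardE.
Qed.

Section Representatives.
Variables (k n : nat) (r : 'I_k) (j0 : 'I_n).
Implicit Type i : ('I_(uphalf k) + 'I_k)%type.

Definition orbit_rep_leaves i : {set 'I_k} :=
  match i with
  | inl e => r |: take_set [set~ r] e.*2
  | inr s => take_set [set~ r] s
  end.

Definition orbit_rep_quot i : option 'I_k := if i is inr _ then Some r else None.

Definition orbit_rep i := orbit_form (orbit_rep_leaves i) (fun _ => j0) (orbit_rep_quot i).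

Lemma center_notin_take_set m : r \notin take_set [set~ r] m.
Proof. by apply/negP => /(subsetP (take_set_sub _ _)); rewrite !inE eqxx. Qed.

Lemma card_take_setC1 m : m < k -> #|take_set [set~ r] m| = m.
Proof. by move=> m_lt; rewrite card_take_set // cardsC1 card_ord; lia. Qed.

Lemma card_orbit_rep_leaves i :
  #|orbit_rep_leaves i| = match i with inl e => e.*2.+1 | inr s => s end.
Proof.
case: i => [e|s] /=; last exact: card_take_setC1.
by rewrite cardsU1 center_notin_take_set card_take_setC1 // -gtn_uphalf_double.
Qed.

Lemma orbit_rep_ok i : orbit_form_ok (orbit_rep_leaves i) (orbit_rep_quot i).
Proof.
have := card_orbit_rep_leaves i; case: i => [e|s] /=; last by rewrite center_notin_take_set.
by move=> ->; rewrite /= odd_double.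
Qed.

Lemma orbit_rep_in_orbit i : orbit_rep i \in lc_orbit (clique_star k n r).
Proof.
case: i => [e|s]; last exact/orbit_form_star_in_orbit/center_notin_take_set.
have := mem_lc_orbit_lc (r, j0) (orbit_form_star_in_orbit j0 (center_notin_take_set e.*2)).
rewrite (@lc_orbit_form_center _ _ _ (fun _ => j0)) ?center_notin_take_set //.
by rewrite card_take_setC1 ?odd_double // -gtn_uphalf_double.
Qed.

Lemma orbit_iso_orbit_rep G :
  G \in lc_orbit (clique_star k n r) -> exists i, graph_iso G (orbit_rep i).
Proof.
rewrite (clique_star_orbit_form _ (fun _ => j0)) => G_orbit.
have ok0 : orbit_form_ok set0 (Some r) by rewrite /= inE.
have [L [h [b [ok ->]]]] := lc_orbit_of_orbit_form ok0 G_orbit.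
case: b ok => [c /= cL|/= oddL].
  have s_lt : #|L| < k.
    have : L \subset [set~ c] by apply/subsetP => l lL; rewrite !inE; apply: contraNneq cL => <-.
    by move/subset_leq_card; rewrite cardsC1 card_ord; have := ltn_ord c; lia.
  exists (inr (Ordinal s_lt)); apply: orbit_form_iso => //; first exact: (orbit_rep_ok (inr _)).
  by rewrite card_orbit_rep_leaves.
have cardL : #|L| = (#|L|./2).*2.+1 by rewrite -[LHS]odd_double_half oddL.
have e_lt : #|L|./2 < uphalf k.
  by rewrite gtn_uphalf_double -cardL; apply: leq_trans (max_card _) _; rewrite card_ord.
exists (inl (Ordinal e_lt)); apply: orbit_form_iso => //; first exact: (orbit_rep_ok (inl _)).
by rewrite card_orbit_rep_leaves.
Qed.

Lemma orbit_rep_iso_inj i i' : 2 < k -> 1 < n -> graph_iso (orbit_rep i) (orbit_rep i') -> i = i'.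
Proof.
move=> k_gt2 n_gt1 iso.
have /eqP := card_pendants_iso iso; rewrite !card_pendants_orbit_form ?card_ord //.
rewrite eqn_pmul2r ?card_orbit_rep_leaves => [/eqP|]; last lia.
have := has_core_dominator_iso iso; have := has_core_dominator_iso (graph_iso_sym iso).
rewrite !has_core_dominator_orbit_form ?orbit_rep_ok ?card_ord // !card_orbit_rep_leaves.
case: i i' {iso} => [e|s] [e'|s'] /=.
- by move=> _ _ [/double_inj eq_e]; congr inl; apply: val_inj.
- by move=> _ /(_ isT) even_s eq_s; rewrite eq_s /= odd_double in even_s.
- by move=> /(_ isT) even_s _ eq_s; rewrite -eq_s /= odd_double in even_s.
- by move=> _ _ eq_s; congr inr; apply: val_inj.
Qed.

End Representatives.

Unset Implicit Arguments.

Theorem theorem16 (k n : nat) (r : 'I_k) :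
  3 <= k -> 2 <= n ->
  #|iso_classes (lc_orbit (clique_star k n r))| = uphalf k + k.
Proof.
move=> k_gt2 n_gt1; pose j0 : 'I_n := Ordinal (ltnW n_gt1).
rewrite (card_iso_classes_transversal (@orbit_rep_in_orbit k n r j0)
                                      (@orbit_iso_orbit_rep k n r j0)).
  by rewrite card_sum !card_ord.
by move=> i i'; apply: orbit_rep_iso_inj.
Qed.
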